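(* Let $m \ge 5$ be odd and $n = 3^m-1$. Then the ternary cyclic code $\mathcal{C}_{(1,2,m)}$ has parameters $[n,k,d]$ with $d \ge \frac{3^{(m-1)/2}+13}{2}$ if $m \equiv 1 \pmod 4$ and $d \ge \frac{3^{(m-1)/2}+11}{2}$ if $m \equiv 3 \pmod 4$, and $k = \frac{n}{2}$ if $m \equiv 1 \pmod 4$ and $k = \frac{n+2}{2}$ if $m \equiv 3 \pmod 4$.
   Context: Let $m \ge 2$ be an integer, $n = 3^m-1$, and let $\alpha$ be a primitive element of $\mathbb{F}_{3^m}$. For an integer $0 \le j \le n-1$ with $3$-adic expansion $j = \sum_{t=0}^{m-1} j_t 3^t$, $j_t \in \{0,1,2\}$, let $w_3(j) = \sum_{t=0}^{m-1} j_t$. For distinct $i_1, i_2 \in \{0,1,2,3\}$ let $T_{(i_1,i_2,m)} = \{1 \le j \le n-1 : w_3(j) \equiv i_1 \text{ or } i_2 \pmod 4\}$ and $g_{(i_1,i_2,m)}(x) = \prod_{j \in T_{(i_1,i_2,m)}} (x - \alpha^j) \in \mathbb{F}_3[x]$. $\mathcal{C}_{(i_1,i_2,m)}$ denotes the ternary cyclic code of length $n$ with generator polynomial $g_{(i_1,i_2,m)}(x)$. Parameters $[n,k,d]$ mean length, dimension over $\mathbb{F}_3$, and minimum Hamming distance. *)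

From HB Require Import structures.
From mathcomp Require Import all_boot all_order all_algebra.
Set Implicit Arguments. Unset Strict Implicit. Unset Printing Implicit Defensive.
Import GRing.Theory.
Local Open Scope ring_scope.

Definition w3 (m j : nat) : nat := (\sum_(t < m) (j %/ 3 ^ t %% 3))%N.

Definition Tset (i1 i2 m : nat) : {set 'I_(3 ^ m - 1)} :=
  [set j : 'I_(3 ^ m - 1) | (0 < j)%N &&
     ((w3 m j %% 4 == i1 %% 4)%N || (w3 m j %% 4 == i2 %% 4)%N)].

(* The generator polynomial g_(i1,i2,m)(x) = prod_{j in T} (x - alpha^j), computed in F[x]
   where F is the field with 3^m elements and alpha a primitive element. *)
Definition gpoly (F : finFieldType) (alpha : F) (i1 i2 m : nat) : {poly F} :=
  \prod_(j in Tset i1 i2 m) ('X - (alpha ^+ j)%:P).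

Definition emb3 (F : finFieldType) (a : 'F_3) : F := (val a)%:R.

Definition word_poly (n : nat) (c : 'rV['F_3]_n) : {poly 'F_3} := \sum_(i < n) (c 0 i)%:P * 'X^i.

(* The ternary cyclic code of length n = 3^m - 1 with generator polynomial g:
   the words whose polynomial is a multiple of g (i.e. the ideal (g) in F_3[x]/(x^n - 1)). *)
Definition cyc_code (F : finFieldType) (alpha : F) (i1 i2 m : nat) : {set 'rV['F_3]_(3 ^ m - 1)} :=
  [set c | gpoly alpha i1 i2 m %| map_poly (@emb3 F) (word_poly c)].

Definition code_dim (n : nat) (C : {set 'rV['F_3]_n}) : nat := \dim (<<enum C>>)%VS.

Definition hwt (n : nat) (c : 'rV['F_3]_n) : nat := #|[set i : 'I_n | c 0 i != 0]|.
Definition hdist (n : nat) (c c' : 'rV['F_3]_n) : nat := hwt (c - c').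

(* The generator polynomial g has coefficients in F_3: multiplication by 3
   modulo n = 3^m - 1 rotates base-3 digits, so it preserves digit sums and
   permutes the defining set T, and the Frobenius map fixes g.  So the dimension
   is n - |T|, and |T| is read off from the numbers of digit strings with a given
   digit sum modulo 4, which satisfy a three-term recurrence in m.
   For the distance write m = 2h + 1 and 3^h = 2R + 1, so n = 2 (6R^2 + 6R + 1).
   The multiplier u = n/2 - (3^h + 1) for odd h, u = n/2 - (3^h - 1) for even h,
   is invertible modulo n, and for 1 <= k <= L, where L = R + 5 or R + 6, the
   residue of u k modulo n has an explicit base-3 expansion with digit sum 1 or 2
   modulo 4.  So alpha^u is a primitive n-th root of unity whose first L powers
   are zeros of the code, and the BCH bound gives d > L. *)

From HB Require Import structures.
From mathcomp Require Import all_boot all_algebra all_field zify ring.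
Import GRing.Theory.

Lemma w3_nil j : w3 0 j = 0.
Proof. by rewrite /w3 big_ord0. Qed.

Lemma w3S m j : w3 m.+1 j = j %% 3 + w3 m (j %/ 3).
Proof.
rewrite /w3 big_ord_recl expn0 divn1; congr (_ + _).
by apply: eq_bigr => i _; rewrite /= expnS divnMA.
Qed.

Lemma w3_digit m q r : r < 3 -> w3 m.+1 (3 * q + r) = r + w3 m q.
Proof. by move=> r_lt3; rewrite w3S; congr (_ + w3 m _); lia. Qed.

Lemma w3_0 m : w3 m 0 = 0.
Proof. by rewrite /w3 big1 // => i _; rewrite div0n mod0n. Qed.

Lemma w3_le m j : w3 m j <= 2 * m.
Proof.
elim: m j => [|m IHm] j; first by rewrite w3_nil.
by rewrite w3S; have := IHm (j %/ 3); have := ltn_pmod j (isT : 0 < 3); lia.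
Qed.

Lemma base3_ind (P : nat -> nat -> Prop) :
  (P 0 0) -> (forall m q r, q < 3 ^ m -> r < 3 -> P m q -> P m.+1 (3 * q + r)) ->
  forall m y, y < 3 ^ m -> P m y.
Proof.
move=> P00 PS; elim=> [|m IHm] y; first by rewrite expn0 ltnS leqn0 => /eqP ->.
rewrite expnS (divn_eq y 3) mulnC => y_lt.
apply: PS; [lia | exact: ltn_pmod | apply: IHm; lia].
Qed.

Lemma w3_cat a b x y : y < 3 ^ a -> w3 (a + b) (x * 3 ^ a + y) = w3 a y + w3 b x.
Proof.
move: a y; apply: base3_ind => [|a q r q_lt r_lt3 IHa]; first by rewrite w3_nil muln1 addn0.
have -> : x * 3 ^ a.+1 + (3 * q + r) = 3 * (x * 3 ^ a + q) + r by rewrite expnS; lia.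
by rewrite addSn !w3_digit // IHa addnA.
Qed.

Lemma w3_compl m y : y < 3 ^ m -> w3 m (3 ^ m - 1 - y) = 2 * m - w3 m y.
Proof.
move: m y; apply: base3_ind => [|m q r q_lt r_lt3 IHm]; first by rewrite !w3_nil.
have -> : 3 ^ m.+1 - 1 - (3 * q + r) = 3 * (3 ^ m - 1 - q) + (2 - r).
  by rewrite expnS; lia.
by rewrite !w3_digit ?IHm //; [have := w3_le m q; lia | lia].
Qed.

Lemma odd_w3 m y : y < 3 ^ m -> odd (w3 m y) = odd y.
Proof.
move: m y; apply: base3_ind => [|m q r _ r_lt3 IHm]; first by rewrite w3_nil.
by rewrite /= w3_digit // !oddD IHm; case: (odd q); case: (odd r).
Qed.

Lemma w3_widen a b y : y < 3 ^ a -> a <= b -> w3 b y = w3 a y.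
Proof.
move=> y_lt /subnKC <-; have := w3_cat a (b - a) 0 y y_lt.
by rewrite mul0n add0n w3_0 addn0.
Qed.

Lemma w3S_high m x y : y < 3 ^ m -> w3 m.+1 (x * 3 ^ m + y) = w3 m y + x %% 3.
Proof.
move=> y_lt; rewrite -addn1 w3_cat //; congr (_ + _).
by rewrite w3S w3_nil addn0.
Qed.

Definition w3_count m r := \sum_(0 <= j < 3 ^ m) (w3 m j %% 4 == r).

Lemma w3_countS m r : r < 4 ->
  w3_count m.+1 r = w3_count m r + w3_count m ((r + 3) %% 4) + w3_count m ((r + 2) %% 4).
Proof.
move=> r_lt4; rewrite /w3_count expnSr big_nat_mul -!big_split /=.
apply: eq_bigr => q _; rewrite -{1}[q * 3]add0n big_addn mulSn addnK.
rewrite !big_nat_recl // big_geq // addn0 addnA.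
have digit d : d < 3 ->
    (w3 m.+1 (d + q * 3) %% 4 == r) = (w3 m q %% 4 == (r + 4 - d) %% 4).
  by move=> d_lt3; rewrite addnC mulnC w3_digit //; apply/eqP/eqP; lia.
rewrite !digit // subn0 modnDr (modn_small r_lt4).
have -> : r + 4 - 1 = r + 3 by lia.
by have -> : r + 4 - 2 = r + 2 by lia.
Qed.

Lemma w3_count_mod4 m : let t := 3 ^ m in
  (m %% 4 = 0 -> 4 * w3_count m 0 = t + 3 /\ 4 * w3_count m 1 + 1 = t /\
                 4 * w3_count m 2 + 1 = t /\ 4 * w3_count m 3 + 1 = t) /\
  (m %% 4 = 1 -> 4 * w3_count m 0 = t + 1 /\ 4 * w3_count m 1 = t + 1 /\
                 4 * w3_count m 2 = t + 1 /\ 4 * w3_count m 3 + 3 = t) /\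
  (m %% 4 = 2 -> 4 * w3_count m 0 + 1 = t /\ 4 * w3_count m 1 + 1 = t /\
                 4 * w3_count m 2 = t + 3 /\ 4 * w3_count m 3 + 1 = t) /\
  (m %% 4 = 3 -> 4 * w3_count m 0 = t + 1 /\ 4 * w3_count m 1 + 3 = t /\
                 4 * w3_count m 2 = t + 1 /\ 4 * w3_count m 3 = t + 1).
Proof.
elim: m => [|m IHm] /=; first by rewrite /w3_count expn0 !big_nat1 !w3_nil.
rewrite !w3_countS //= expnS.
move: IHm; move: (w3_count m 0) (w3_count m 1) (w3_count m 2) (w3_count m 3) (3 ^ m) => a b c d t.
lia.
Qed.

Lemma card_Tset12 m : odd m ->
  #|Tset 1 2 m| = (if m %% 4 == 1 then (3 ^ m - 1) %/ 2 else (3 ^ m - 3) %/ 2).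
Proof.
move=> m_odd; have m_mod4 : m %% 4 = 1 \/ m %% 4 = 3.
  by have := modn2 m; rewrite m_odd /=; lia.
have t_gt0 : 0 < 3 ^ m by rewrite expn_gt0.
(* 0 is excluded from T, and 3^m - 1 (all digits 2, digit sum 2m = 2 mod 4) is
   counted but is not an index. *)
have cardT : #|Tset 1 2 m| + 1 = w3_count m 1 + w3_count m 2.
  rewrite /w3_count -big_split /=; set n := 3 ^ m - 1.
  have -> : 3 ^ m = n.+1 by rewrite /n; lia.
  rewrite big_nat_recr //= -sum1_card big_mkcond big_mkord.
  congr (_ + _).
    apply: eq_bigr => j _; rewrite inE; case: (posnP j) => [->|j_gt0] /=.
      by rewrite w3_0.
    by case: eqP; case: eqP => //= ->.
  rewrite /n -[3 ^ m - 1]subn0 w3_compl // w3_0 subn0.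
  by case: m_mod4 => m_mod4; rewrite (_ : 2 * m %% 4 = 2) //; lia.
have [_ [count1 [_ count3]]] := w3_count_mod4 m.
move: cardT; case: m_mod4 => m_mod4; rewrite m_mod4 /=.
  by have [] := count1 m_mod4; lia.
by have [] := count3 m_mod4; lia.
Qed.

Lemma w3_rot m j : 0 < m -> j < 3 ^ m - 1 ->
  let j' := (3 * j) %% (3 ^ m - 1) in w3 m j' = w3 m j /\ (j' == 0) = (j == 0).
Proof.
case: m => // m _.
have t_gt0 : 0 < 3 ^ m by rewrite expn_gt0.
have [a [r r_lt ->]] : exists a, exists2 r, r < 3 ^ m & j = a * 3 ^ m + r.
  by exists (j %/ 3 ^ m), (j %% 3 ^ m); rewrite ?ltn_mod -?divn_eq.
rewrite expnS => j_lt.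
have a_lt3 : a < 3 by move: (3 ^ m) t_gt0 r_lt j_lt => t; nia.
have rot_lt : 3 * r + a < 3 * 3 ^ m - 1.
  by move: a_lt3 j_lt; case: a => [|[|[|a]]] // _; lia.
have -> : (3 * (a * 3 ^ m + r)) %% (3 * 3 ^ m - 1) = 3 * r + a.
  rewrite (_ : 3 * (a * 3 ^ m + r) = a * (3 * 3 ^ m - 1) + (3 * r + a)).
    by rewrite modnMDl modn_small.
  by move: (3 ^ m) t_gt0 => t; nia.
rewrite /= w3_digit // w3S_high // modn_small // addnC; split=> //.
by apply/eqP/eqP; move: (3 ^ m) t_gt0 => t; nia.
Qed.

Lemma mul3_mod_inj m i j : i < 3 ^ m - 1 -> j < 3 ^ m - 1 ->
  (3 * i) %% (3 ^ m - 1) = (3 * j) %% (3 ^ m - 1) -> i = j.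
Proof.
case: m => [|m]; first by rewrite expn0.
move=> i_lt j_lt /(congr1 (fun x => (3 ^ m * x) %% (3 ^ m.+1 - 1))).
have t_gt0 : 0 < 3 ^ m.+1 by rewrite expn_gt0.
have undo k : k < 3 ^ m.+1 - 1 -> (3 ^ m * ((3 * k) %% (3 ^ m.+1 - 1))) %% (3 ^ m.+1 - 1) = k.
  move=> k_lt; rewrite modnMmr mulnA -expnSr.
  rewrite (_ : 3 ^ m.+1 * k = k * (3 ^ m.+1 - 1) + k) ?modnMDl ?modn_small //.
  by move: (3 ^ m.+1) t_gt0 => t; nia.
by rewrite !undo.
Qed.

(* When 3^h = 2R + 1 and m = 2h + 1: bch_half R = (3^m - 1)/2, and bch_shift R is
   3^h + 1 or 3^h - 1 according to the parity of R, which is the parity of h. *)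
Definition bch_half R := 6 * R * R + 6 * R + 1.
Definition bch_shift R := if odd R then 2 * R + 2 else 2 * R.
Definition bch_multiplier R := bch_half R - bch_shift R.
Definition bch_run R := if odd R then R + 5 else R + 6.
Definition bch_residue R k :=
  (if odd k then bch_half R else 2 * bch_half R) - k * bch_shift R.

Lemma bch_multiplier_mod R k : 0 < R -> 0 < k -> k * bch_shift R <= bch_half R ->
  (bch_multiplier R * k) %% (2 * bch_half R) = bch_residue R k.
Proof.
move=> R_gt0 k_gt0; rewrite /bch_multiplier /bch_residue.
have s_gt0 : 0 < bch_shift R by rewrite /bch_shift; case: ifP; lia.
move: (bch_half R) (bch_shift R) s_gt0 => t s s_gt0 ks_le.
have [q [k_eq|k_eq]] : exists q, k = 2 * q + 1 \/ k = 2 * q + 2.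
  by exists (k.-1./2); have := odd_double_half k.-1; case: (odd _) => /=; lia.
  rewrite k_eq oddD oddM /= (_ : _ * _ = q * (2 * t) + (t - k * s)).
    by rewrite modnMDl modn_small; lia.
  by rewrite k_eq; nia.
rewrite k_eq oddD oddM /= (_ : _ * _ = q * (2 * t) + (2 * t - k * s)).
  by rewrite modnMDl modn_small; lia.
by rewrite k_eq; nia.
Qed.

Lemma coprime_bch_multiplier R : 0 < R -> coprime (bch_multiplier R) (2 * bch_half R).
Proof.
move=> R_gt0; rewrite /bch_multiplier /bch_half /bch_shift.
apply: modn_coprime; first by case: ifP; nia.
exists (if odd R then 3 * R else 3 * R + 3).
have := odd_double_half R; move: (R./2) => s; case: (odd R) => /= R_eq.
  rewrite (_ : _ * _ = (3 * s + 1) * (2 * (6 * R * R + 6 * R + 1)) + 1).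
    by rewrite modnMDl modn_small //; nia.
  by rewrite -R_eq; nia.
rewrite (_ : _ * _ = (3 * s + 1) * (2 * (6 * R * R + 6 * R + 1)) + 1).
  by rewrite modnMDl modn_small //; nia.
by rewrite -R_eq; nia.
Qed.

Lemma bch_len h R : 3 ^ h = 2 * R + 1 -> 3 ^ (h + h.+1) - 1 = 2 * bch_half R.
Proof. by move=> pow3_h; rewrite expnD expnS pow3_h /bch_half; nia. Qed.

Definition w3_in12 m x := (w3 m x %% 4 == 1) || (w3 m x %% 4 == 2).

Section DesignedZeros.
Variables h R : nat.
Hypothesis pow3_h : 3 ^ h = 2 * R + 1.
Hypothesis R_ge4 : 4 <= R.
Hypothesis odd_R : odd R = odd h.
Local Notation X := (3 ^ h).
Local Notation m := (h + h.+1).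

Lemma h_ge2 : 2 <= h.
Proof. by case: h pow3_h => [|[|h']] //=; lia. Qed.

Lemma w3_low y : y < X -> w3 h.+1 y = w3 h y.
Proof. by move=> y_lt; rewrite (w3_widen h h.+1 y y_lt). Qed.

Lemma w3_par y : y < X -> w3 h y %% 2 = y %% 2.
Proof. by move=> y_lt; rewrite !modn2 odd_w3. Qed.

Lemma w3_small_values : [/\ w3 h 1 = 1, w3 h 2 = 2, w3 h 3 = 1 & w3 h 4 = 2].
Proof. by rewrite !(w3_widen 2 h) ?h_ge2 // /w3 !big_ord_recl !big_ord0. Qed.

(* Each case exhibits the residue as hi * 3^h + lo with lo < 3^h, or as the
   complement 3^m - 1 - y of such a number, and reads off its digit sum. *)
Lemma w3_bch_residue_odd k : odd R -> 0 < k <= R + 5 -> w3_in12 m (bch_residue R k).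
Proof.
move=> R_odd /andP[k_gt0 k_le]; rewrite /bch_residue /bch_shift R_odd /w3_in12.
have [w3_1 w3_2 w3_3 w3_4] := w3_small_values.
have sub_half x : x + k * (2 * R + 2) = bch_half R -> bch_half R - k * (2 * R + 2) = x.
  by move=> <-; rewrite addnK.
have k_par := modn2 k; have R_par := modn2 R; rewrite R_odd in R_par.
case: ifP => k_odd; rewrite k_odd in k_par.
  have [k_leR | R_ltk] := leqP k R.
    have [a R_eq] : exists a, R = k + a by exists (R - k); lia.
    rewrite (sub_half ((1 * X + a) * X + a)); last by rewrite pow3_h R_eq /bch_half; nia.
    have a_lt : a < X by lia.
    by rewrite w3_cat ?w3S_high //; have := w3_par _ a_lt; lia.
  have [k_eq|k_eq] : k = R + 2 \/ k = R + 4 by lia.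
    rewrite (sub_half ((X - 1 - 2) * X + (X - 1 - 1))); last first.
      by rewrite pow3_h k_eq /bch_half; nia.
    by rewrite w3_cat ?w3_low ?w3_compl //; lia.
  rewrite (sub_half ((X - 1 - 4) * X + (X - 1 - 3))); last first.
    by rewrite pow3_h k_eq /bch_half; nia.
  by rewrite w3_cat ?w3_low ?w3_compl //; lia.
rewrite -(bch_len h R pow3_h) (_ : k * _ = k * X + k); last by rewrite pow3_h; lia.
have k_lt : k < X by lia.
rewrite w3_compl; last by rewrite expnD expnS; nia.
by rewrite w3_cat ?w3_low //; have := w3_par _ k_lt; have := w3_le h k; lia.
Qed.

Lemma w3_bch_residue_even k : ~~ odd R -> 0 < k <= R + 6 -> w3_in12 m (bch_residue R k).
Proof.
move=> R_even /andP[k_gt0 k_le]; rewrite /bch_residue /bch_shift (negPf R_even) /w3_in12.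
have [w3_1 w3_2 w3_3 w3_4] := w3_small_values.
have sub_half x : x + k * (2 * R) = bch_half R -> bch_half R - k * (2 * R) = x.
  by move=> <-; rewrite addnK.
have k_par := modn2 k; have h_par := modn2 h; rewrite -odd_R (negPf R_even) in h_par.
case: ifP => k_odd; rewrite k_odd in k_par.
  have [k_leR | R_ltk] := leqP k R.
    have [a R_eq] : exists a, R = k + a by exists (R - k); lia.
    rewrite (sub_half ((1 * X + a) * X + (X - 1 - a))); last first.
      by rewrite pow3_h R_eq /bch_half; nia.
    have a_lt : a < X by lia.
    by rewrite w3_cat ?w3S_high ?w3_compl //; have := w3_le h a; lia.
  have [k_eq|[k_eq|k_eq]] : k = R + 1 \/ k = R + 3 \/ k = R + 5 by lia.
  - rewrite (sub_half ((1 * X + 0) * X + 0)); last by rewrite pow3_h k_eq /bch_half; nia.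
    by rewrite w3_cat ?w3S_high ?w3_0 // expn_gt0.
  - rewrite (sub_half ((X - 1 - 1) * X + 2)); last by rewrite pow3_h k_eq /bch_half; nia.
    by rewrite w3_cat ?w3_low ?w3_compl //; lia.
  - rewrite (sub_half ((X - 1 - 3) * X + 4)); last by rewrite pow3_h k_eq /bch_half; nia.
    by rewrite w3_cat ?w3_low ?w3_compl //; lia.
have [k_leX | X_ltk] := leqP k X.
  rewrite -(bch_len h R pow3_h) (_ : k * (2 * R) = (k - 1) * X + (X - 1 - (k - 1))); last first.
    by rewrite pow3_h; nia.
  rewrite w3_compl; last by rewrite expnD expnS; nia.
  have k1_lt : k - 1 < X by lia.
  rewrite w3_cat ?w3_low ?w3_compl //; last by lia.
  by have := w3_le h (k - 1); lia.
have R_eq : R = 4 by lia.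
have h_eq : h = 2.
  case: h pow3_h h_ge2 => [|[|[|h']]] //; rewrite R_eq !expnS.
  by have := expn_gt0 3 h'; lia.
have k_eq : k = 10 by lia.
by rewrite k_eq R_eq h_eq /bch_half /w3 !big_ord_recl big_ord0.
Qed.

Lemma bch_multiplier_in_Tset k : 0 < k <= bch_run R ->
  exists2 j : 'I_(3 ^ m - 1), j \in Tset 1 2 m & bch_multiplier R * k = j %[mod 3 ^ m - 1].
Proof.
move=> /andP[k_gt0 k_le].
have len_gt0 : 0 < 3 ^ m - 1 by rewrite (bch_len h R pow3_h) /bch_half; lia.
exists (Ordinal (ltn_pmod (bch_multiplier R * k) len_gt0)); last by rewrite /= modn_mod.
have shift_le : k * bch_shift R <= bch_half R.
  by move: k_le; rewrite /bch_run /bch_shift /bch_half; case: ifP => _; nia.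
have in12 : w3_in12 m (bch_residue R k).
  move: k_le; rewrite /bch_run; case: ifP => R_odd k_le.
    by apply: w3_bch_residue_odd; rewrite ?R_odd ?k_gt0.
  by apply: w3_bch_residue_even; rewrite ?R_odd ?k_gt0.
rewrite inE /= (bch_len h R pow3_h) bch_multiplier_mod ?shift_le //; last by lia.
rewrite lt0n; apply/andP; split; last exact: in12.
by apply: contraTneq in12 => ->; rewrite /w3_in12 w3_0.
Qed.

End DesignedZeros.

Lemma double_half_pow3 h : 3 ^ h = 2 * (3 ^ h)./2 + 1.
Proof. by have := odd_double_half (3 ^ h); rewrite oddX orbT /=; lia. Qed.

Lemma odd_half_pow3 h : odd (3 ^ h)./2 = odd h.
Proof.
elim: h => [//|h IHh]; have := odd_double_half (3 ^ h); rewrite oddX orbT /=.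
rewrite expnS -IHh; move: (_./2) => r <-.
rewrite (_ : 3 * (1 + r.*2) = true + (3 * r + 1).*2) ?half_bit_double; last lia.
by rewrite oddD oddM addbT.
Qed.

Local Open Scope ring_scope.

Section WordPolynomials.
Context {n : nat}.
Implicit Types (c : 'rV['F_3]_n) (p g : {poly 'F_3}).

Lemma coef_word_poly c (i : 'I_n) : (word_poly c)`_i = c 0 i.
Proof.
rewrite /word_poly coef_sum (bigD1 i) //= coefCM coefXn eqxx mulr1 big1 ?addr0 // => j.
by rewrite coefCM coefXn eq_sym (inj_eq val_inj) => /negPf->; rewrite mulr0.
Qed.

Lemma size_word_poly c : (size (word_poly c) <= n)%N.
Proof.
apply/leq_sizeP => j j_ge; rewrite /word_poly coef_sum big1 // => i _.
by rewrite coefCM coefXn gtn_eqF ?mulr0 // (leq_trans (ltn_ord i)).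
Qed.

Definition poly_row p : 'rV['F_3]_n := \row_i p`_i.

Lemma poly_rowK p : (size p <= n)%N -> word_poly (poly_row p) = p.
Proof.
move=> size_p; apply/polyP => j; have [j_lt | j_ge] := ltnP j n.
  by rewrite (coef_word_poly _ (Ordinal j_lt)) mxE.
by rewrite !nth_default // (leq_trans _ j_ge) // size_word_poly.
Qed.

Lemma word_polyK : cancel (@word_poly n) poly_row.
Proof. by move=> c; apply/rowP => i; rewrite mxE coef_word_poly. Qed.

Lemma word_poly_lin a c c' :
  word_poly (a *: c + c') = a%:P * word_poly c + word_poly c'.
Proof.
apply/polyP => j; rewrite coefD coefCM; have [j_lt | j_ge] := ltnP j n.
  by rewrite !(coef_word_poly _ (Ordinal j_lt)) !mxE.
by rewrite !nth_default ?mulr0 ?addr0 // (leq_trans _ j_ge) // size_word_poly.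
Qed.

End WordPolynomials.
Arguments poly_row : clear implicits.

Definition multiples n (g : {poly 'F_3}) : {set 'rV['F_3]_n} := [set c | g %| word_poly c].

Lemma multiples_lin n g a (c c' : 'rV_n) :
  c \in multiples n g -> c' \in multiples n g -> a *: c + c' \in multiples n g.
Proof. by rewrite !inE word_poly_lin => g_c g_c'; rewrite dvdp_add ?dvdp_mull. Qed.

Lemma card_multiples n (g : {poly 'F_3}) : g != 0 -> (size g <= n.+1)%N ->
  #|multiples n g| = (3 ^ (n.+1 - size g))%N.
Proof.
move=> g_neq0 size_g; set k := (n.+1 - size g)%N.
have size_enc (q : 'rV['F_3]_k) : (size (word_poly q * g)%R <= n)%N.
  rewrite (leq_trans (size_polyMleq _ _)) //.
  by have := size_word_poly q; rewrite /k; lia.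
pose encode (q : 'rV['F_3]_k) := poly_row n (word_poly q * g).
have encode_inj : injective encode.
  move=> q q' /(congr1 (@word_poly n)); rewrite !poly_rowK ?size_enc //.
  by move/(mulIf g_neq0)/(congr1 (poly_row k)); rewrite !word_polyK.
have -> : multiples n g = encode @: setT.
  apply/setP => c; rewrite inE; apply/idP/imsetP => [g_c | [q _ ->]].
    have size_q : (size (word_poly c %/ g)%R <= k)%N.
      have [->|q_neq0] := eqVneq (word_poly c %/ g) 0; first by rewrite size_poly0.
      have := size_word_poly c; rewrite -{1}(divpK g_c) size_mul // /k.
      have := size_poly_gt0 g; rewrite g_neq0.
      by move: (size g) (size (word_poly c %/ g)%R) => t s; lia.
    by exists (poly_row k (word_poly c %/ g)); rewrite // /encode poly_rowK // divpK // word_polyK.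
  by rewrite /encode poly_rowK ?size_enc // dvdp_mull.
by rewrite card_imset // cardsT card_mx card_Fp // mul1n.
Qed.

Lemma card_code_dim n (C : {set 'rV['F_3]_n}) : 0 \in C ->
  (forall a c c', c \in C -> c' \in C -> a *: c + c' \in C) ->
  #|C| = (3 ^ code_dim C)%N.
Proof.
move=> C0 C_lin; have memV v : (v \in <<enum C>>%VS) = (v \in C).
  apply/idP/idP => [v_span | v_C]; last by rewrite memv_span ?mem_enum.
  rewrite (coord_span (X := in_tuple (enum C)) v_span).
  elim/big_ind: _ => // [x y x_C y_C | i _]; first by rewrite -[x]scale1r C_lin.
  by rewrite -[_ *: _]addr0 C_lin // -mem_enum mem_nth // size_tuple.
by rewrite -(eq_card memV) card_vspace card_Fp.
Qed.

Lemma code_dim_multiples n (g : {poly 'F_3}) : g != 0 -> (size g <= n.+1)%N ->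
  code_dim (multiples n g) = (n.+1 - size g)%N.
Proof.
move=> g_neq0 size_g; apply/(@expnI 3) => //.
rewrite -card_code_dim ?card_multiples // => [|a c c'].
  by rewrite inE /word_poly big1 ?dvdp0 // => i _; rewrite mxE mul0r.
exact: multiples_lin.
Qed.

Lemma sum_mul_horner_exp (R : comNzRingType) n (a : 'I_n -> R) (x : R) (p : {poly R}) :
  \sum_(i < n) a i * x ^+ i * p.[x ^+ i] =
  \sum_(t < size p) p`_t * \sum_(i < n) a i * (x ^+ t.+1) ^+ i.
Proof.
under eq_bigr => i _ do rewrite horner_coef mulr_sumr.
rewrite exchange_big; apply: eq_bigr => t _; rewrite mulr_sumr; apply: eq_bigr => i _.
by rewrite -!exprM mulSn exprD (mulnC i t); ring.
Qed.

Lemma bch_bound (F : fieldType) n L (a : 'I_n -> F) (beta : F) :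
  n.-primitive_root beta -> [exists i, a i != 0%R] ->
  (forall k, (0 < k <= L)%N -> \sum_(i < n) a i * (beta ^+ k) ^+ i = 0) ->
  (L < #|[set i | a i != 0%R]|)%N.
Proof.
move=> prim /existsP[i0 a_i0] zeros; set S := [set i | a i != 0].
rewrite ltnNge; apply/negP => supp_le.
have i0_S : i0 \in S by rewrite inE.
pose Q := \prod_(j in S :\ i0) ('X - (beta ^+ j)%:P).
have size_Q : size Q = #|S|.
  by rewrite /Q -big_enum size_prod_XsubC -cardE (cardsD1 i0 S) i0_S.
have Q_root j : j \in S :\ i0 -> Q.[beta ^+ j] = 0.
  by move=> j_S; rewrite horner_prod (bigD1 j) //= hornerXsubC subrr mul0r.
have Q_i0 : Q.[beta ^+ i0] != 0.
  rewrite horner_prod; apply/prodf_neq0 => j; rewrite !inE hornerXsubC subr_eq0.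
  by rewrite (eq_prim_root_expr prim) !modn_small // eq_sym => /andP[].
have beta_neq0 : beta != 0.
  apply/eqP => beta0; have := prim_expr_order prim.
  by rewrite beta0 expr0n gtn_eqF ?(prim_order_gt0 prim) // => /eqP; rewrite eq_sym oner_eq0.
(* Q kills every beta^i with i in S except i0, so the sum below is nonzero; but
   expanding Q writes it as a combination of the sums assumed to vanish. *)
suff : \sum_(i < n) a i * beta ^+ i * Q.[beta ^+ i] = 0.
  rewrite (bigD1 i0) //= big1 ?addr0 => [/eqP|i i_i0].
    by rewrite !mulf_eq0 (negPf a_i0) (negPf Q_i0) expf_eq0 (negPf beta_neq0) andbF.
  have [a_i|a_i] := eqVneq (a i) 0; first by rewrite a_i !mul0r.
  by rewrite Q_root ?mulr0 // !inE i_i0.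
rewrite sum_mul_horner_exp big1 // => t _; rewrite zeros ?mulr0 //.
by have := ltn_ord t; rewrite [in X in (_ < X)%N]size_Q; lia.
Qed.

Section Char3.
Context {F : finFieldType}.
Hypothesis F_pchar3 : (3 \in [pchar F])%N.

Lemma natr_mod3 k : k%:R = (k %% 3)%:R :> F.
Proof. by rewrite {1}(divn_eq k 3) natrD natrM (pcharf0 F_pchar3) mulr0 add0r. Qed.

Lemma emb3D (a b : 'F_3) : emb3 F (a + b) = emb3 F a + emb3 F b.
Proof. by rewrite /emb3 -natrD [RHS]natr_mod3. Qed.

Lemma emb3_is_zmod_morphism : zmod_morphism (emb3 F).
Proof. by move=> a b; apply/eqP; rewrite eq_sym subr_eq -emb3D subrK. Qed.

Lemma emb3_is_monoid_morphism : monoid_morphism (emb3 F).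
Proof. by split=> // a b; rewrite /emb3 -natrM [RHS]natr_mod3. Qed.

HB.instance Definition _ :=
  GRing.isZmodMorphism.Build 'F_3 F (emb3 F) emb3_is_zmod_morphism.
HB.instance Definition _ :=
  GRing.isMonoidMorphism.Build 'F_3 F (emb3 F) emb3_is_monoid_morphism.

Lemma emb3_inj : injective (emb3 F).
Proof. exact: fmorph_inj. Qed.

Definition proj3 (x : F) : 'F_3 := if x == 0 then 0 else if x == 1 then 1 else -1.

Lemma proj3K x : x ^+ 3 = x -> emb3 F (proj3 x) = x.
Proof.
move=> x_fixed; have : x * (x - 1) * (x + 1) = 0.
  by rewrite -mulrA -subr_sqr expr1n mulrBr mulr1 -exprS x_fixed subrr.
move/eqP; rewrite /proj3 !mulf_eq0 subr_eq0 addr_eq0 => /orP[/orP[]|] /eqP->.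
- by rewrite eqxx rmorph0.
- by rewrite oner_eq0 eqxx rmorph1.
have m1_neq0 : (-1 : F) != 0 by rewrite oppr_eq0 oner_eq0.
have m1_neq1 : (-1 : F) != 1.
  apply: contra_neq (oner_neq0 F) => m1_eq1.
  by rewrite -(pcharf0 F_pchar3) -[3%N]/(1 + 1 + 1)%N !natrD -{2}m1_eq1 addNr add0r.
by rewrite (negPf m1_neq0) (negPf m1_neq1) rmorphN1.
Qed.

Lemma horner_word_poly n (c : 'rV['F_3]_n) x :
  (map_poly (emb3 F) (word_poly c)).[x] = \sum_(i < n) emb3 F (c 0 i) * x ^+ i.
Proof.
rewrite /word_poly rmorph_sum horner_sum; apply: eq_bigr => i _.
by rewrite rmorphM /= map_polyC map_polyXn hornerCM hornerXn.
Qed.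

Section CyclicCode.
Context {alpha : F} {m i1 i2 : nat}.
Hypothesis alpha_prim : (3 ^ m - 1).-primitive_root alpha.
Local Notation n := (3 ^ m - 1)%N.
Local Notation T := (Tset i1 i2 m).
Local Notation g := (gpoly alpha i1 i2 m).
Local Notation C := (cyc_code alpha i1 i2 m).

Lemma cyc_len_gt0 : (0 < n)%N.
Proof. exact: prim_order_gt0 alpha_prim. Qed.

Definition rot3 (j : 'I_n) : 'I_n := Ordinal (ltn_pmod (3 * j)%N cyc_len_gt0).

Lemma rot3_inj : injective rot3.
Proof.
move=> i j /(congr1 val) /= eq_ij; apply/val_inj.
exact: mul3_mod_inj (ltn_ord i) (ltn_ord j) eq_ij.
Qed.

Lemma rot3_Tset j : (rot3 j \in T) = (j \in T).
Proof.
have m_gt0 : (0 < m)%N by case: m cyc_len_gt0.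
by have [w3_rot3 rot3_eq0] := w3_rot _ _ m_gt0 (ltn_ord j); rewrite !inE /= w3_rot3 !lt0n rot3_eq0.
Qed.

Lemma gpoly_coef_frobenius i : g`_i ^+ 3 = g`_i.
Proof.
suff frob_g : map_poly (pFrobenius_aut F_pchar3) g = g.
  by rewrite -{2}frob_g coef_map /= pFrobenius_autE.
rewrite /gpoly rmorph_prod [RHS](reindex_inj rot3_inj) /=.
apply: eq_big => [j | j _]; first by rewrite rot3_Tset.
rewrite map_polyXsubC /= pFrobenius_autE -exprM mulnC.
by rewrite -(expr_mod _ (prim_expr_order alpha_prim)).
Qed.

Definition gpoly3 : {poly 'F_3} := map_poly proj3 g.

Lemma map_gpoly3 : map_poly (emb3 F) gpoly3 = g.
Proof.
apply/polyP => i; rewrite coef_map /= coef_map_id0 ?proj3K ?gpoly_coef_frobenius //.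
by rewrite /proj3 eqxx.
Qed.

Lemma size_gpoly3 : size gpoly3 = #|T|.+1.
Proof.
rewrite -(size_map_inj_poly emb3_inj) ?rmorph0 // map_gpoly3.
by rewrite /gpoly -big_enum size_prod_XsubC cardE.
Qed.

Lemma cyc_code_multiples : C = multiples n gpoly3.
Proof. by apply/setP => c; rewrite !inE -map_gpoly3 dvdp_map. Qed.

Lemma code_dim_cyc_code : code_dim C = (n - #|T|)%N.
Proof.
rewrite cyc_code_multiples code_dim_multiples ?size_gpoly3 //.
  by rewrite -size_poly_eq0 size_gpoly3.
by rewrite ltnS (leq_trans (max_card _)) ?card_ord.
Qed.

Lemma cyc_code_root c (j : 'I_n) : c \in C -> j \in T ->
  (map_poly (emb3 F) (word_poly c)).[alpha ^+ j] = 0.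
Proof.
rewrite inE => /divpK <- j_T; rewrite hornerM.
by rewrite [g.[_]]horner_prod (bigD1 j) //= hornerXsubC subrr mul0r mulr0.
Qed.

Lemma cyc_code_dist u L c c' : coprime u n ->
  (forall k, (0 < k <= L)%N -> exists2 j : 'I_n, j \in T & (u * k = j %[mod n])%N) ->
  c \in C -> c' \in C -> c != c' -> (L < hdist c c')%N.
Proof.
move=> u_coprime zeros c_C c'_C c_neq_c'; set d := c - c'.
have d_C : d \in C.
  by rewrite /d cyc_code_multiples addrC -scaleN1r multiples_lin // -cyc_code_multiples.
have supp_d : [set i | emb3 F (d 0 i) != 0] = [set i | d 0 i != 0].
  by apply/setP => i; rewrite !inE fmorph_eq0.
rewrite /hdist /hwt -/d -supp_d; apply: (@bch_bound _ _ _ _ (alpha ^+ u)).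
- by rewrite prim_root_exp_coprime.
- apply: contraR c_neq_c' => /existsPn d_eq0; rewrite -subr_eq0; apply/eqP/rowP => i.
  by have := d_eq0 i; rewrite negbK fmorph_eq0 [RHS]mxE => /eqP.
move=> k /zeros[j j_T uk_eq_j]; rewrite -horner_word_poly -exprM.
have alpha_n := prim_expr_order alpha_prim.
by rewrite -(expr_mod (u * k) alpha_n) uk_eq_j expr_mod ?cyc_code_root.
Qed.

End CyclicCode.

End Char3.

Theorem theorem4 (F : finFieldType) (alpha : F) (m : nat) :
  (5 <= m)%N -> odd m ->
  #|F| = (3 ^ m)%N ->
  (3 ^ m - 1).-primitive_root alpha ->
  let n := (3 ^ m - 1)%N in
  let C := cyc_code alpha 1 2 m in
  (* minimum distance bound: any two distinct codewords are at Hamming distance >= bound *)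
  (forall c c', c \in C -> c' \in C -> c != c' ->
     (hdist c c' >= (if m %% 4 == 1 then (3 ^ ((m - 1) %/ 2) + 13) %/ 2
                     else (3 ^ ((m - 1) %/ 2) + 11) %/ 2))%N) /\
  (* dimension *)
  code_dim C = (if m %% 4 == 1 then n %/ 2 else (n + 2) %/ 2)%N.
Proof.
move=> m_ge5 m_odd; have [h m_eq] : exists h, m = (h + h.+1)%N.
  by exists m./2; have := odd_double_half m; rewrite m_odd /=; lia.
subst m.
move=> card_F alpha_prim n C.
have F_pchar3 : (3 \in [pchar F])%N by apply: card_finPcharP card_F _.
split; last first.
  rewrite /C code_dim_cyc_code // card_Tset12 // /n.
  have : (3 <= 3 ^ (h + h.+1))%N by rewrite -{1}(expn1 3) leq_pexp2l //; lia.
  by have := double_half_pow3 (h + h.+1); case: ifP => _; lia.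
have [R pow3_h odd_R] : exists2 R, (3 ^ h = 2 * R + 1)%N & odd R = odd h.
  by exists (3 ^ h)./2; rewrite -?double_half_pow3 ?odd_half_pow3.
have R_ge4 : (4 <= R)%N.
  have : (3 ^ 2 <= 3 ^ h)%N by rewrite leq_pexp2l //; lia.
  by rewrite pow3_h; lia.
move=> c c' c_C c'_C c_neq_c'.
have u_coprime : coprime (bch_multiplier R) (3 ^ (h + h.+1) - 1).
  by rewrite (bch_len h R pow3_h) coprime_bch_multiplier //; lia.
have := cyc_code_dist F_pchar3 alpha_prim _ (bch_run R) c c' u_coprime
  (bch_multiplier_in_Tset _ _ pow3_h R_ge4 odd_R) c_C c'_C c_neq_c'.
rewrite (_ : (h + h.+1 - 1) %/ 2 = h)%N ?pow3_h /bch_run; last by lia.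
have := modn2 R; have := modn2 h; rewrite odd_R.
by case: (odd h) => /=; case: ifP; lia.
Qed.
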